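(* Let $p>0$ and let $(u_n)_{n\ge0}$ be a sequence in $E^1$ which is $E_p$ summable to $\mu\in E^1$. If $\sqrt{n}\,D(u_{n-1},u_n)=O(1)$ as $n\to\infty$, then $(u_n)$ is bounded, i.e. there is $M>0$ with $D(u_n,\overline{0})<M$ for all $n$.
   Context: $E^1$ denotes the set of fuzzy numbers: functions $u:\mathbb{R}\to[0,1]$ that are normal, fuzzy convex, upper semicontinuous, and have compact support $\overline{\{t:u(t)>0\}}$. For $\alpha\in(0,1]$ the $\alpha$-level set is $[u]_\alpha=\{t:u(t)\ge\alpha\}$ and $[u]_0=\overline{\{t:u(t)>0\}}$; each is a compact interval $[u^-_\alpha,u^+_\alpha]$. Addition and scalar multiplication are defined levelwise: $[u+v]_\alpha=[u^-_\alpha+v^-_\alpha,u^+_\alpha+v^+_\alpha]$ and $[ku]_\alpha=k[u]_\alpha$ for $k\in\mathbb{R}$. The metric is $D(u,v)=\sup_{\alpha\in[0,1]}\max\{|u^-_\alpha-v^-_\alpha|,|u^+_\alpha-v^+_\alpha|\}$. $\overline{0}$ is the fuzzy number equal to $1$ at $0$ and $0$ elsewhere. For $p>0$ the Euler means are $t^{p}_n=\frac{1}{(p+1)^n}\sum_{k=0}^n\binom{n}{k}p^{n-k}u_k$, and $(u_n)$ is $E_p$ summable to $\mu$ if $D(t^p_n,\mu)\to0$. *)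

From Stdlib Require Import Reals Lra.
From Coquelicot Require Import Coquelicot.
Open Scope R_scope.

Definition is_fuzzy_number (u : R -> R) : Prop :=
  (forall t, 0 <= u t <= 1) /\
  (exists t, u t = 1) /\
  (forall x y l, 0 <= l <= 1 -> Rmin (u x) (u y) <= u (l * x + (1 - l) * y)) /\
  (forall t eps, 0 < eps ->
     exists delta, 0 < delta /\ forall s, Rabs (s - t) < delta -> u s < u t + eps) /\
  (* compact support: the closure of {t | u t > 0} is bounded (hence compact) *)
  (exists B, forall t, 0 < u t -> Rabs t <= B).

(** alpha-level set: [u]_a = {t | u t >= a} for a in (0,1],
    [u]_0 = closure of {t | u t > 0}. *)
Definition level_set (u : R -> R) (a : R) (t : R) : Prop :=
  if Rlt_dec 0 a then a <= u t
  else forall eps, 0 < eps -> exists s, Rabs (s - t) < eps /\ 0 < u s.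

Definition lo (u : R -> R) (a : R) : R := real (Glb_Rbar (level_set u a)).
Definition hi (u : R -> R) (a : R) : R := real (Lub_Rbar (level_set u a)).

Definition Dend (l1 h1 l2 h2 : R -> R) : R :=
  real (Lub_Rbar (fun d => exists a, 0 <= a <= 1 /\
          d = Rmax (Rabs (l1 a - l2 a)) (Rabs (h1 a - h2 a)))).

Definition Dfz (u v : R -> R) : R := Dend (lo u) (hi u) (lo v) (hi v).

Definition fz0 (t : R) : R := if Req_EM_T t 0 then 1 else 0.

(** Level-set endpoints of the Euler mean
    t^p_n = (p+1)^{-n} sum_{k=0}^n C(n,k) p^{n-k} u_k,
    computed levelwise (all coefficients are nonnegative, so
    [c u]_a = [c u^-_a, c u^+_a] and sums add endpoints). *)
Definition euler_lo (p : R) (u : nat -> R -> R) (n : nat) (a : R) : R :=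
  / (p + 1) ^ n * sum_f_R0 (fun k => Binomial.C n k * p ^ (n - k) * lo (u k) a) n.
Definition euler_hi (p : R) (u : nat -> R -> R) (n : nat) (a : R) : R :=
  / (p + 1) ^ n * sum_f_R0 (fun k => Binomial.C n k * p ^ (n - k) * hi (u k) a) n.

Definition D_euler (p : R) (u : nat -> R -> R) (n : nat) (mu : R -> R) : R :=
  Dend (euler_lo p u n) (euler_hi p u n) (lo mu) (hi mu).

Definition Ep_summable (p : R) (u : nat -> R -> R) (mu : R -> R) : Prop :=
  is_lim_seq (fun n => D_euler p u n mu) 0.

(* Fix a level [a] and let [x k] be the lower (or upper) endpoint of [u k] at [a].
   The Euler weights [C(m,k) p^(m-k) / (p+1)^m] are the binomial distribution with
   mean [m/(p+1)] and variance [m p/(p+1)^2], so for [m ~ n (p+1)] they concentrate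
   on [k ~ n] with [sum_k w_k (n-k)^2 <= n + 1].  The hypothesis gives
   [|x n - x k| <= 2K |sqrt n - sqrt k| <= K + K (n-k)^2/n], hence [x n] is within
   [O(1)] of the [m]-th Euler mean, which is bounded because the means converge to
   the endpoints of [mu].  All constants are uniform in [a] and [n]. *)

From Stdlib Require Import Reals Lra Lia.
From Coquelicot Require Import Coquelicot.
Open Scope R_scope.

Lemma Rabs_sub_le x y : Rabs (x - y) <= Rabs x + Rabs y.
Proof. unfold Rminus; rewrite <- (Rabs_Ropp y); apply Rabs_triang. Qed.

Definition euler_sum (p : R) (m : nat) (f : nat -> R) : R :=
  sum_f_R0 (fun k => Binomial.C m k * p ^ (m - k) * f k) m.

(* [euler_lo p u m a] is convertible to [euler_mean p m (fun k => lo (u k) a)]. *)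
Definition euler_mean (p : R) (m : nat) (f : nat -> R) : R :=
  / (p + 1) ^ m * euler_sum p m f.

Lemma euler_sum_ext p m f g :
  (forall k, (k <= m)%nat -> f k = g k) -> euler_sum p m f = euler_sum p m g.
Proof. intros H; unfold euler_sum; apply sum_eq; intros k Hk; rewrite H; auto. Qed.

Lemma sum_f_R0_lincomb (f g : nat -> R) a b n :
  sum_f_R0 (fun k => a * f k + b * g k) n = a * sum_f_R0 f n + b * sum_f_R0 g n.
Proof. induction n; simpl; [ring | rewrite IHn; ring]. Qed.

Lemma euler_sum_lincomb p m f g a b :
  euler_sum p m (fun k => a * f k + b * g k) = a * euler_sum p m f + b * euler_sum p m g.
Proof. unfold euler_sum; rewrite <- sum_f_R0_lincomb; apply sum_eq; intros; ring. Qed.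

Lemma C_ge0 m k : 0 <= Binomial.C m k.
Proof.
  unfold Binomial.C; apply Rmult_le_pos; [apply pos_INR|].
  left; apply Rinv_0_lt_compat, Rmult_lt_0_compat; apply lt_0_INR, Factorial.lt_O_fact.
Qed.

(* Pascal's rule; the extreme terms are split off because [Binomial.C m (S m)] is
   not [0] but the junk value [/ INR (S m)]. *)
Lemma euler_sum_S p m f :
  euler_sum p (S m) f = euler_sum p m (fun k => f (S k)) + p * euler_sum p m f.
Proof.
  destruct m as [|m].
  { unfold euler_sum; simpl; rewrite !C_n_0, C_n_n; ring. }
  unfold euler_sum.
  rewrite (decomp_sum (fun k => Binomial.C (S (S m)) k * _ * f k) (S (S m))) by lia.
  rewrite (decomp_sum (fun k => Binomial.C (S m) k * _ * f k) (S m)) by lia.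
  simpl pred; rewrite !tech5.
  assert (Hmid : sum_f_R0 (fun i => Binomial.C (S (S m)) (S i) * p ^ (S (S m) - S i) * f (S i)) m =
    sum_f_R0 (fun k => Binomial.C (S m) k * p ^ (S m - k) * f (S k)) m +
    p * sum_f_R0 (fun i => Binomial.C (S m) (S i) * p ^ (S m - S i) * f (S i)) m).
  { match goal with |- _ = ?s1 + p * ?s2 => transitivity (1 * s1 + p * s2); [|ring] end.
    rewrite <- sum_f_R0_lincomb.
    apply sum_eq; intros i Hi.
    rewrite <- pascal by lia.
    replace (S (S m) - S i)%nat with (S (S m - S i)) by lia.
    replace (S m - i)%nat with (S (S m - S i)) by lia.
    simpl; ring. }
  rewrite Hmid, !C_n_0, !C_n_n, !Nat.sub_diag, !Nat.sub_0_r; simpl; ring.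
Qed.

Lemma euler_sum_const p m c : euler_sum p m (fun _ => c) = c * (p + 1) ^ m.
Proof.
  induction m.
  - unfold euler_sum; simpl; rewrite C_n_0; ring.
  - rewrite euler_sum_S, IHm; simpl; ring.
Qed.

(* Binomial(m, 1/(p+1)) has mean m/(p+1) and variance m p/(p+1)^2. *)
Lemma euler_sum_sq_dev p m a :
  euler_sum p m (fun k => (a - INR k) ^ 2) * (p + 1) ^ 2 =
  ((a * (p + 1) - INR m) ^ 2 + INR m * p) * (p + 1) ^ m.
Proof.
  revert a; induction m; intros a.
  - unfold euler_sum; simpl; rewrite C_n_0; ring.
  - rewrite euler_sum_S.
    rewrite (euler_sum_ext p m (fun k => (a - INR (S k)) ^ 2) (fun k => (a - 1 - INR k) ^ 2))
      by (intros; rewrite S_INR; ring).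
    rewrite Rmult_plus_distr_r, Rmult_assoc, (IHm a), (IHm (a - 1)), S_INR; simpl; ring.
Qed.

Lemma euler_sum_abs_le p m f g : 0 <= p ->
  (forall k, (k <= m)%nat -> Rabs (f k) <= g k) -> Rabs (euler_sum p m f) <= euler_sum p m g.
Proof.
  intros Hp H; unfold euler_sum.
  eapply Rle_trans; [apply sum_f_R0_triangle|].
  apply sum_Rle; intros k Hk.
  assert (Hw : 0 <= Binomial.C m k * p ^ (m - k)) by (apply Rmult_le_pos; [apply C_ge0 | apply pow_le; lra]).
  rewrite Rabs_mult, (Rabs_pos_eq _ Hw).
  apply Rmult_le_compat_l; auto.
Qed.

Lemma euler_mean_const p m c : 0 <= p -> euler_mean p m (fun _ => c) = c.
Proof.
  intros Hp; unfold euler_mean; rewrite euler_sum_const.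
  field; apply pow_nonzero; lra.
Qed.

Lemma euler_mean_lincomb p m f g a b :
  euler_mean p m (fun k => a * f k + b * g k) = a * euler_mean p m f + b * euler_mean p m g.
Proof. unfold euler_mean; rewrite euler_sum_lincomb; ring. Qed.

Lemma euler_mean_abs_le p m f g : 0 <= p ->
  (forall k, (k <= m)%nat -> Rabs (f k) <= g k) -> Rabs (euler_mean p m f) <= euler_mean p m g.
Proof.
  intros Hp H; unfold euler_mean.
  assert (Hr : 0 < / (p + 1) ^ m) by (apply Rinv_0_lt_compat, pow_lt; lra).
  rewrite Rabs_mult, (Rabs_pos_eq _ (Rlt_le _ _ Hr)).
  apply Rmult_le_compat_l; [lra | now apply euler_sum_abs_le].
Qed.

Lemma euler_mean_bounded p m f B : 0 <= p ->
  (forall k, (k <= m)%nat -> Rabs (f k) <= B) -> Rabs (euler_mean p m f) <= B.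
Proof.
  intros Hp H; rewrite <- (euler_mean_const p m B Hp); now apply euler_mean_abs_le.
Qed.

Lemma euler_mean_dev_le p m c f g : 0 <= p ->
  (forall k, (k <= m)%nat -> Rabs (c - f k) <= g k) ->
  Rabs (c - euler_mean p m f) <= euler_mean p m g.
Proof.
  intros Hp H.
  replace (c - euler_mean p m f) with (euler_mean p m (fun k => c * 1 + (-1) * f k))
    by (rewrite euler_mean_lincomb, euler_mean_const; [ring | exact Hp]).
  apply euler_mean_abs_le; [exact Hp|].
  intros k Hk; replace (c * 1 + -1 * f k) with (c - f k) by ring; auto.
Qed.

Lemma euler_mean_sq_dev_le p m n : 0 <= p -> Rabs (INR n * (p + 1) - INR m) <= 1 ->
  euler_mean p m (fun k => (INR n - INR k) ^ 2) <= INR n + 1.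
Proof.
  intros Hp Hm.
  assert (Hr : 0 < (p + 1) ^ m) by (apply pow_lt; lra).
  assert (Hsq : (INR n * (p + 1) - INR m) ^ 2 <= 1).
  { apply Rabs_le_between in Hm; nra. }
  assert (Hmp : INR m * p <= (INR n * (p + 1) + 1) * p).
  { apply Rmult_le_compat_r; [exact Hp|]; apply Rabs_le_between in Hm; lra. }
  apply (Rmult_le_reg_r ((p + 1) ^ 2)); [nra|].
  unfold euler_mean; rewrite Rmult_assoc, euler_sum_sq_dev.
  rewrite Rmult_comm, Rmult_assoc, Rinv_r, Rmult_1_r by lra.
  pose proof (pos_INR n); nra.
Qed.

Lemma inv_sqrt_S_le j : / sqrt (INR (S j)) <= 2 * (sqrt (INR (S j)) - sqrt (INR j)).
Proof.
  set (a := sqrt (INR (S j))); set (b := sqrt (INR j)).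
  assert (Ha2 : a * a = INR j + 1) by (unfold a; rewrite sqrt_sqrt, S_INR; [ring | apply pos_INR]).
  assert (Hb2 : b * b = INR j) by (unfold b; rewrite sqrt_sqrt; [ring | apply pos_INR]).
  assert (Ha : 0 < a) by (apply sqrt_lt_R0, lt_0_INR; lia).
  assert (Hb : 0 <= b) by apply sqrt_pos.
  assert (Hab : b <= a) by nra.
  apply (Rmult_le_reg_l a); [exact Ha|].
  rewrite Rinv_r by lra; nra.
Qed.

Lemma dist_le_of_increments (x y : nat -> R) N :
  (forall k, (N <= k)%nat -> Rabs (x k - x (S k)) <= y (S k) - y k) ->
  forall k d, (N <= k)%nat -> Rabs (x (k + d)%nat - x k) <= y (k + d)%nat - y k.
Proof.
  intros H k d Hk; induction d.
  - rewrite Nat.add_0_r, Rminus_diag, Rabs_R0; lra.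
  - rewrite Nat.add_succ_r.
    replace (x (S (k + d)) - x k) with ((x (S (k + d)) - x (k + d)%nat) + (x (k + d)%nat - x k)) by ring.
    eapply Rle_trans; [apply Rabs_triang|].
    rewrite Rabs_minus_sym.
    pose proof (H (k + d)%nat ltac:(lia)); lra.
Qed.

Lemma sqrt_increment_dist K N (x : nat -> R) : 0 <= K ->
  (forall k, (N <= k)%nat -> Rabs (x k - x (S k)) <= K / sqrt (INR (S k))) ->
  forall n k, (N <= k)%nat -> (N <= n)%nat ->
  Rabs (x n - x k) <= 2 * K * Rabs (sqrt (INR n) - sqrt (INR k)).
Proof.
  intros HK H.
  set (y := fun k => 2 * K * sqrt (INR k)).
  assert (Hinc : forall k, (N <= k)%nat -> Rabs (x k - x (S k)) <= y (S k) - y k).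
  { intros k Hk; unfold y.
    pose proof (inv_sqrt_S_le k); pose proof (H k Hk).
    assert (K / sqrt (INR (S k)) <= K * (2 * (sqrt (INR (S k)) - sqrt (INR k))))
      by (apply Rmult_le_compat_l; auto).
    lra. }
  assert (Hle : forall k d, (N <= k)%nat ->
    Rabs (x (k + d)%nat - x k) <= 2 * K * Rabs (sqrt (INR (k + d)) - sqrt (INR k))).
  { intros k d Hk.
    assert (sqrt (INR k) <= sqrt (INR (k + d))) by (apply sqrt_le_1_alt, le_INR; lia).
    rewrite (Rabs_pos_eq (sqrt _ - _)) by lra.
    pose proof (dist_le_of_increments x y N Hinc k d Hk); unfold y in *; lra. }
  intros n k Hk Hn; destruct (Nat.le_ge_cases k n) as [L|L].
  - replace n with (k + (n - k))%nat by lia; auto.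
  - replace k with (n + (k - n))%nat by lia.
    rewrite Rabs_minus_sym, (Rabs_minus_sym (sqrt _)); auto.
Qed.

(* AM-GM: [2 |s - t| <= 1 + (s - t)^2], and [(s - t)^2 <= (s^2 - t^2)^2 / s^2] for [t >= 0]. *)
Lemma two_abs_sqrt_sub_le n k : (1 <= n)%nat ->
  2 * Rabs (sqrt (INR n) - sqrt (INR k)) <= 1 + (INR n - INR k) ^ 2 / INR n.
Proof.
  intros Hn; set (s := sqrt (INR n)); set (t := sqrt (INR k)).
  assert (Hs2 : s * s = INR n) by (unfold s; rewrite sqrt_sqrt; [ring | apply pos_INR]).
  assert (Ht2 : t * t = INR k) by (unfold t; rewrite sqrt_sqrt; [ring | apply pos_INR]).
  assert (Hs : 0 < s) by (apply sqrt_lt_R0, lt_0_INR; lia).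
  assert (Ht : 0 <= t) by apply sqrt_pos.
  rewrite <- Hs2, <- Ht2.
  replace ((s * s - t * t) ^ 2 / (s * s)) with ((s - t) ^ 2 * ((s + t) / s) ^ 2) by (field; lra).
  assert (Hq : 1 <= (s + t) / s).
  { apply (Rmult_le_reg_l s); [exact Hs|]; field_simplify; lra. }
  assert (Hamgm : 2 * Rabs (s - t) <= 1 + (s - t) ^ 2).
  { pose proof (pow2_ge_0 (Rabs (s - t) - 1)); rewrite <- (pow2_abs (s - t)); lra. }
  assert (Hq2 : 1 <= ((s + t) / s) ^ 2) by nra.
  pose proof (pow2_ge_0 (s - t)); nra.
Qed.

Lemma slow_oscillation_dev_le K A N (x : nat -> R) : 0 <= K ->
  (forall k, (k <= N)%nat -> Rabs (x k) <= A) ->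
  (forall k, (N <= k)%nat -> Rabs (x k - x (S k)) <= K / sqrt (INR (S k))) ->
  forall n k, (N <= n)%nat -> (1 <= n)%nat ->
  Rabs (x n - x k) <= 2 * A + K + K * (INR n - INR k) ^ 2 / INR n.
Proof.
  intros HK HA Hstep n k Hn Hn1.
  assert (Hnpos : 0 < INR n) by (apply lt_0_INR; lia).
  assert (Hdev : forall j, (N <= j)%nat ->
    Rabs (x n - x j) <= K + K * (INR n - INR j) ^ 2 / INR n).
  { intros j Hj.
    pose proof (sqrt_increment_dist K N x HK Hstep n j Hj Hn).
    pose proof (two_abs_sqrt_sub_le n j Hn1).
    replace (K + K * (INR n - INR j) ^ 2 / INR n) with (K * (1 + (INR n - INR j) ^ 2 / INR n))
      by (field; lra).
    assert (K * (2 * Rabs (sqrt (INR n) - sqrt (INR j))) <= K * (1 + (INR n - INR j) ^ 2 / INR n))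
      by (apply Rmult_le_compat_l; auto).
    lra. }
  assert (HA0 : 0 <= A) by (eapply Rle_trans; [apply Rabs_pos | apply (HA 0%nat); lia]).
  destruct (Nat.le_gt_cases N k) as [Hk|Hk].
  { pose proof (Hdev k Hk); lra. }
  (* For [k < N] go through [x N]: [n - N] is closer to [0] than [n - k]. *)
  assert (Hsq : (INR n - INR N) ^ 2 <= (INR n - INR k) ^ 2).
  { assert (INR k < INR N) by (apply lt_INR; lia).
    assert (INR N <= INR n) by (apply le_INR; lia).
    nra. }
  assert (K * (INR n - INR N) ^ 2 / INR n <= K * (INR n - INR k) ^ 2 / INR n).
  { apply Rmult_le_compat_r; [left; apply Rinv_0_lt_compat; lra|].
    apply Rmult_le_compat_l; auto. }
  pose proof (Hdev N (Nat.le_refl N)).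
  pose proof (HA N (Nat.le_refl N)); pose proof (HA k ltac:(lia)).
  replace (x n - x k) with ((x n - x N) + (x N - x k)) by ring.
  pose proof (Rabs_triang (x n - x N) (x N - x k)).
  pose proof (Rabs_sub_le (x N) (x k)).
  lra.
Qed.

Lemma euler_bounded_slow_oscillation_bounded p K A C N (x : nat -> R) :
  0 <= p -> 0 <= K -> (1 <= N)%nat ->
  (forall k, (k <= N)%nat -> Rabs (x k) <= A) ->
  (forall k, (N <= k)%nat -> Rabs (x k - x (S k)) <= K / sqrt (INR (S k))) ->
  (forall m, (N <= m)%nat -> Rabs (euler_mean p m x) <= C) ->
  forall n, Rabs (x n) <= C + 2 * A + 3 * K.
Proof.
  intros Hp HK HN HA Hstep HE n.
  assert (HA0 : 0 <= A) by (eapply Rle_trans; [apply Rabs_pos | apply (HA 0%nat); lia]).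
  assert (HC0 : 0 <= C) by (eapply Rle_trans; [apply Rabs_pos | apply (HE N); lia]).
  destruct (Nat.le_gt_cases n N) as [Hn|Hn].
  { pose proof (HA n Hn); lra. }
  assert (Hnpos : 1 <= INR n) by (apply (le_INR 1); lia).
  destruct (nfloor_ex (INR n * (p + 1)) ltac:(nra)) as [j [Hj1 Hj2]].
  set (m := S j).
  assert (Hm : Rabs (INR n * (p + 1) - INR m) <= 1)
    by (unfold m; rewrite S_INR; apply Rabs_le_between; lra).
  assert (HNm : (N <= m)%nat).
  { assert (INR n < INR m) as Hlt by (unfold m; rewrite S_INR; nra).
    apply INR_lt in Hlt; lia. }
  assert (Hdev : Rabs (x n - euler_mean p m x) <= 2 * A + 3 * K).
  { eapply Rle_trans.
    { apply euler_mean_dev_le with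
        (g := fun k => (2 * A + K) * 1 + (K / INR n) * (INR n - INR k) ^ 2); [exact Hp|].
      intros k _.
      replace ((2 * A + K) * 1 + K / INR n * (INR n - INR k) ^ 2)
        with (2 * A + K + K * (INR n - INR k) ^ 2 / INR n) by (field; lra).
      apply (slow_oscillation_dev_le K A N); auto; lia. }
    rewrite euler_mean_lincomb, euler_mean_const by exact Hp.
    pose proof (euler_mean_sq_dev_le p m n Hp Hm).
    assert (K / INR n * euler_mean p m (fun k => (INR n - INR k) ^ 2) <= K / INR n * (INR n + 1)).
    { apply Rmult_le_compat_l; [apply Rdiv_le_0_compat; lra | auto]. }
    assert (K / INR n * (INR n + 1) <= 2 * K).
    { replace (K / INR n * (INR n + 1)) with (K + K / INR n) by (field; lra).
      assert (K / INR n <= K) by (apply Rle_div_l; nra).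
      lra. }
    lra. }
  pose proof (HE m HNm).
  pose proof (Rabs_triang_inv (x n) (euler_mean p m x)); lra.
Qed.

Lemma Lub_Rbar_real_bounds (E : R -> Prop) B x :
  (forall y, E y -> y <= B) -> E x -> x <= real (Lub_Rbar E) <= B.
Proof.
  intros HB Ex; destruct (Lub_Rbar_correct E) as [Hub Hleast].
  specialize (Hleast B HB); specialize (Hub x Ex).
  destruct (Lub_Rbar E); simpl in *; tauto.
Qed.

Lemma Glb_Rbar_real_bounds (E : R -> Prop) B x :
  (forall y, E y -> B <= y) -> E x -> B <= real (Glb_Rbar E) <= x.
Proof.
  intros HB Ex; destruct (Glb_Rbar_correct E) as [Hlb Hgreatest].
  specialize (Hgreatest B HB); specialize (Hlb x Ex).
  destruct (Glb_Rbar E); simpl in *; tauto.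
Qed.

Lemma level_set_endpoints_abs_le (u : R -> R) B :
  (exists t, u t = 1) -> (forall t, 0 < u t -> Rabs t <= B) ->
  forall a, 0 <= a <= 1 -> Rabs (lo u a) <= B /\ Rabs (hi u a) <= B.
Proof.
  intros [t0 Ht0] HB a Ha.
  assert (Hmem : level_set u a t0).
  { unfold level_set; destruct (Rlt_dec 0 a); [lra|].
    intros eps Heps; exists t0; rewrite Rminus_diag, Rabs_R0; lra. }
  assert (Hbd : forall t, level_set u a t -> - B <= t <= B).
  { intros t Ht; apply Rabs_le_between.
    unfold level_set in Ht; destruct (Rlt_dec 0 a); [apply HB; lra|].
    (* [t] is in the closure of the support, which lies in [[-B, B]]. *)
    destruct (Rle_dec (Rabs t) B) as [|Hfar]; [assumption|].
    destruct (Ht (Rabs t - B)) as [s [Hst Hs]]; [lra|].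
    pose proof (HB s Hs); pose proof (Rabs_triang_inv t s); rewrite Rabs_minus_sym in Hst; lra. }
  pose proof (Glb_Rbar_real_bounds (level_set u a) (- B) t0 (fun t Ht => proj1 (Hbd t Ht)) Hmem).
  pose proof (Lub_Rbar_real_bounds (level_set u a) B t0 (fun t Ht => proj2 (Hbd t Ht)) Hmem).
  pose proof (Hbd t0 Hmem).
  unfold lo, hi; split; apply Rabs_le_between; lra.
Qed.

Lemma fuzzy_endpoints_bounded u : is_fuzzy_number u ->
  exists B, forall a, 0 <= a <= 1 -> Rabs (lo u a) <= B /\ Rabs (hi u a) <= B.
Proof.
  intros [_ [Hnormal [_ [_ [B HB]]]]].
  exists B; exact (level_set_endpoints_abs_le u B Hnormal HB).
Qed.

Lemma fuzzy_endpoints_bounded_upto (u : nat -> R -> R) :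
  (forall n, is_fuzzy_number (u n)) ->
  forall N, exists B, forall k, (k <= N)%nat -> forall a, 0 <= a <= 1 ->
  Rabs (lo (u k) a) <= B /\ Rabs (hi (u k) a) <= B.
Proof.
  intros Hu N; induction N as [|N [B HB]].
  - destruct (fuzzy_endpoints_bounded _ (Hu 0%nat)) as [B HB].
    exists B; intros k Hk; replace k with 0%nat by lia; exact HB.
  - destruct (fuzzy_endpoints_bounded _ (Hu (S N))) as [B' HB'].
    exists (Rmax B B'); intros k Hk a Ha.
    pose proof (Rmax_l B B'); pose proof (Rmax_r B B').
    destruct (Nat.eq_dec k (S N)) as [->|Hne].
    + destruct (HB' a Ha); lra.
    + destruct (HB k ltac:(lia) a Ha); lra.
Qed.

Lemma fz0_endpoints a : 0 <= a <= 1 -> lo fz0 a = 0 /\ hi fz0 a = 0.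
Proof.
  intros Ha.
  destruct (level_set_endpoints_abs_le fz0 0) with (a := a) as [Hlo Hhi]; auto.
  - exists 0; unfold fz0; destruct (Req_EM_T 0 0); congruence.
  - intros t; unfold fz0; destruct (Req_EM_T t 0) as [->|]; intros; [rewrite Rabs_R0 | ]; lra.
  - apply Rabs_le_between in Hlo, Hhi; lra.
Qed.

Lemma Dend_endpoint_le l1 h1 l2 h2 B :
  (forall a, 0 <= a <= 1 -> Rabs (l1 a - l2 a) <= B /\ Rabs (h1 a - h2 a) <= B) ->
  forall a, 0 <= a <= 1 ->
  Rabs (l1 a - l2 a) <= Dend l1 h1 l2 h2 /\ Rabs (h1 a - h2 a) <= Dend l1 h1 l2 h2.
Proof.
  intros HB a Ha; unfold Dend.
  assert (Hub : forall d, (exists b, 0 <= b <= 1 /\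
      d = Rmax (Rabs (l1 b - l2 b)) (Rabs (h1 b - h2 b))) -> d <= B).
  { intros d [b [Hb ->]]; destruct (HB b Hb); now apply Rmax_lub. }
  destruct (Lub_Rbar_real_bounds _ B _ Hub (ex_intro _ a (conj Ha eq_refl))) as [Hge _].
  split; eapply Rle_trans; [apply Rmax_l | exact Hge | apply Rmax_r | exact Hge].
Qed.

Lemma Dend_le l1 h1 l2 h2 B :
  (forall a, 0 <= a <= 1 -> Rabs (l1 a - l2 a) <= B /\ Rabs (h1 a - h2 a) <= B) ->
  Dend l1 h1 l2 h2 <= B.
Proof.
  intros HB; unfold Dend.
  assert (Hub : forall d, (exists b, 0 <= b <= 1 /\
      d = Rmax (Rabs (l1 b - l2 b)) (Rabs (h1 b - h2 b))) -> d <= B).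
  { intros d [b [Hb ->]]; destruct (HB b Hb); now apply Rmax_lub. }
  assert (H0 : 0 <= 0 <= 1) by lra.
  exact (proj2 (Lub_Rbar_real_bounds _ B _ Hub (ex_intro _ 0 (conj H0 eq_refl)))).
Qed.

Lemma Dfz_endpoint_le u v : is_fuzzy_number u -> is_fuzzy_number v ->
  forall a, 0 <= a <= 1 ->
  Rabs (lo u a - lo v a) <= Dfz u v /\ Rabs (hi u a - hi v a) <= Dfz u v.
Proof.
  intros Hu Hv; destruct (fuzzy_endpoints_bounded u Hu) as [Bu HBu].
  destruct (fuzzy_endpoints_bounded v Hv) as [Bv HBv].
  apply (Dend_endpoint_le _ _ _ _ (Bu + Bv)); intros a Ha.
  destruct (HBu a Ha), (HBv a Ha).
  pose proof (Rabs_sub_le (lo u a) (lo v a)); pose proof (Rabs_sub_le (hi u a) (hi v a)).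
  split; lra.
Qed.

Lemma Dfz_ge0 u v : is_fuzzy_number u -> is_fuzzy_number v -> 0 <= Dfz u v.
Proof.
  intros Hu Hv; destruct (Dfz_endpoint_le u v Hu Hv 0 ltac:(lra)) as [H _].
  eapply Rle_trans; [apply Rabs_pos | exact H].
Qed.

Lemma Ep_summable_endpoints_bounded p u mu : 0 <= p ->
  (forall n, is_fuzzy_number (u n)) -> is_fuzzy_number mu -> Ep_summable p u mu ->
  exists C N, forall m, (N <= m)%nat -> forall a, 0 <= a <= 1 ->
  Rabs (euler_lo p u m a) <= C /\ Rabs (euler_hi p u m a) <= C.
Proof.
  intros Hp Hu Hmu HEp.
  destruct (fuzzy_endpoints_bounded mu Hmu) as [Bmu HBmu].
  apply is_lim_seq_spec in HEp; destruct (HEp (mkposreal 1 Rlt_0_1)) as [N HN]; simpl in HN.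
  exists (1 + Bmu), N; intros m Hm a Ha.
  destruct (fuzzy_endpoints_bounded_upto u Hu m) as [Bm HBm].
  assert (Heuler : forall b, 0 <= b <= 1 ->
    Rabs (euler_lo p u m b) <= Bm /\ Rabs (euler_hi p u m b) <= Bm).
  { intros b Hb; split; apply euler_mean_bounded; auto; intros k Hk; apply (HBm k Hk b Hb). }
  destruct (Dend_endpoint_le (euler_lo p u m) (euler_hi p u m) (lo mu) (hi mu) (Bm + Bmu))
    with (a := a) as [Hlo Hhi]; auto.
  { intros b Hb; destruct (Heuler b Hb), (HBmu b Hb).
    pose proof (Rabs_sub_le (euler_lo p u m b) (lo mu b)).
    pose proof (Rabs_sub_le (euler_hi p u m b) (hi mu b)).
    split; lra. }
  fold (D_euler p u m mu) in Hlo, Hhi.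
  pose proof (HN m Hm); rewrite Rminus_0_r in *; pose proof (Rle_abs (D_euler p u m mu)).
  destruct (HBmu a Ha).
  pose proof (Rabs_triang_inv (euler_lo p u m a) (lo mu a)).
  pose proof (Rabs_triang_inv (euler_hi p u m a) (hi mu a)).
  split; lra.
Qed.

Lemma Dfz_sqrt_step_endpoints_le (u : nat -> R -> R) K N :
  (forall n, is_fuzzy_number (u n)) ->
  (forall n, (N <= n)%nat -> sqrt (INR (S n)) * Dfz (u n) (u (S n)) <= K) ->
  forall k, (N <= k)%nat -> forall a, 0 <= a <= 1 ->
  Rabs (lo (u k) a - lo (u (S k)) a) <= K / sqrt (INR (S k)) /\
  Rabs (hi (u k) a - hi (u (S k)) a) <= K / sqrt (INR (S k)).
Proof.
  intros Hu HK k Hk a Ha.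
  assert (HD : Dfz (u k) (u (S k)) <= K / sqrt (INR (S k))).
  { apply Rle_div_r; [apply sqrt_lt_R0, lt_0_INR; lia | rewrite Rmult_comm; auto]. }
  destruct (Dfz_endpoint_le _ _ (Hu k) (Hu (S k)) a Ha); split; lra.
Qed.

Theorem mainTheorem3 (p : R) (u : nat -> R -> R) (mu : R -> R) :
  0 < p ->
  (forall n, is_fuzzy_number (u n)) ->
  is_fuzzy_number mu ->
  Ep_summable p u mu ->
  (* sqrt(n) D(u_{n-1}, u_n) = O(1) as n -> oo *)
  (exists K N, forall n : nat, (N <= n)%nat ->
     sqrt (INR (S n)) * Dfz (u n) (u (S n)) <= K) ->
  exists M, 0 < M /\ forall n, Dfz (u n) fz0 < M.
Proof.
  intros Hp Hu Hmu HEp [K [N HK]].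
  assert (HK0 : 0 <= K).
  { eapply Rle_trans; [| exact (HK N (Nat.le_refl N))].
    apply Rmult_le_pos; [apply sqrt_pos | apply Dfz_ge0; auto]. }
  pose proof (Dfz_sqrt_step_endpoints_le u K N Hu HK) as Hstep.
  destruct (Ep_summable_endpoints_bounded p u mu ltac:(lra) Hu Hmu HEp) as [C [N1 HC]].
  set (N' := S (N + N1)).
  destruct (fuzzy_endpoints_bounded_upto u Hu N') as [A HA].
  set (M := C + 2 * A + 3 * K).
  assert (Hbound : forall n a, 0 <= a <= 1 -> Rabs (lo (u n) a) <= M /\ Rabs (hi (u n) a) <= M).
  { intros n a Ha; split;
      [ apply (euler_bounded_slow_oscillation_bounded p K A C N' (fun k => lo (u k) a))
      | apply (euler_bounded_slow_oscillation_bounded p K A C N' (fun k => hi (u k) a)) ];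
      try lra; try lia; intros k Hk.
    all: first [ apply (HA k Hk a Ha) | apply (Hstep k ltac:(lia) a Ha)
               | apply (HC k ltac:(lia) a Ha) ]. }
  exists (M + 1); split.
  - destruct (Hbound 0%nat 0 ltac:(lra)) as [H _]; pose proof (Rabs_pos (lo (u 0%nat) 0)); lra.
  - intros n; enough (Dfz (u n) fz0 <= M) by lra.
    apply Dend_le; intros a Ha.
    destruct (fz0_endpoints a Ha) as [-> ->]; rewrite !Rminus_0_r; auto.
Qed.
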